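(* Consider a Why Query with the \texttt{SUM} aggregate, an attribute $X$ with filters $p_1,\dots,p_m$, a threshold $\varepsilon$ and a conciseness parameter $\sigma>0$. If $P^*\subseteq\{p_1,\dots,p_m\}$ is an optimal explanation, i.e. $P^*$ maximizes $\rho_P-\sigma|P|$ over all $P\subseteq\{p_1,\dots,p_m\}$, then $\Delta(D_p)>0$ for every $p\in P^*$.
   Context: $D$ is a finite table of rows; $M$ is a numerical column; $s_1,s_2$ are two disjoint sets of rows (sibling subspaces). $X$ is a categorical column with values $x_1,\dots,x_m$; filter $p_i$ is the condition $X=x_i$. A predicate is a set $P\subseteq\{p_1,\dots,p_m\}$ and $D_P$ is the set of rows whose $X$-value belongs to $P$; $|P|$ is the number of filters in $P$; $D'-D''$ denotes set difference of rows. For $D'\subseteq D$, $\Delta(D')=\sum_{t\in D'\cap s_1}t[M]-\sum_{t\in D'\cap s_2}t[M]$. It is assumed $\Delta(D)>0$. W-causality: $P$ is an actual cause if there exists $\Gamma\subseteq\{p_1,\dots,p_m\}$ with $\Gamma\cap P=\emptyset$ (a valid contingency) such that $\Delta(D-D_\Gamma-D_P)\le\varepsilon<\Delta(D-D_\Gamma)$. W-responsibility: for an actual cause $P$, $\rho_P=\frac{1}{1+\min_\Gamma|\Gamma|_W}$ where $\Gamma$ ranges over valid contingencies for $P$ and $|\Gamma|_W=\max\left(\frac{\Delta(D-D_P)-\Delta(D-D_P-D_\Gamma)}{\Delta(D)},0\right)$; $\rho_P=0$ if $P$ is not an actual cause. *)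

From mathcomp Require Import all_boot all_order all_algebra.
Set Implicit Arguments. Unset Strict Implicit. Unset Printing Implicit Defensive.
Import Order.TTheory GRing.Theory Num.Theory.
Local Open Scope ring_scope.

(* The table D is the set of all rows of the finite type T (D = [set: T]).
   M : T -> R is the numerical column, s1 s2 : {set T} the sibling subspaces,
   X : T -> 'I_m the categorical column (value x_i encoded as i : 'I_m),
   a predicate is a set P : {set 'I_m} of filters p_i := (X = x_i). *)

Section WhyQuery.
Variables (R : realFieldType) (T : finType) (m : nat).
Variables (M : T -> R) (s1 s2 : {set T}) (X : T -> 'I_m) (eps : R).

Definition DP (P : {set 'I_m}) : {set T} := [set t | X t \in P].

Definition Delta (D' : {set T}) : R :=
  \sum_(t in D' :&: s1) M t - \sum_(t in D' :&: s2) M t.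

Definition valid_contingency (P G : {set 'I_m}) : bool :=
  [disjoint G & P] &&
  (Delta ([set: T] :\: DP G :\: DP P) <= eps) &&
  (eps < Delta ([set: T] :\: DP G)).

Definition actual_cause (P : {set 'I_m}) : Prop :=
  exists G : {set 'I_m}, valid_contingency P G.

Definition wsize (P G : {set 'I_m}) : R :=
  Num.max ((Delta ([set: T] :\: DP P) - Delta ([set: T] :\: DP P :\: DP G))
            / Delta [set: T]) 0.

Definition rho (P : {set 'I_m}) : R :=
  match [pick G | valid_contingency P G] with
  | Some G0 =>
      1 / (1 + \big[Num.min/wsize P G0]_(G | valid_contingency P G) wsize P G)
  | None => 0
  end.

Definition objective (sigma : R) (P : {set 'I_m}) : R :=
  rho P - sigma * (#|P|)%:R.

Definition optimal_explanation (sigma : R) (P : {set 'I_m}) : Prop :=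
  forall Q : {set 'I_m}, objective sigma Q <= objective sigma P.

End WhyQuery.

From Pilot Require Import Defs.
From mathcomp Require Import all_boot all_order all_algebra.
Set Implicit Arguments. Unset Strict Implicit. Unset Printing Implicit Defensive.
Import Order.TTheory GRing.Theory Num.Theory.
Local Open Scope ring_scope.

(* If Delta(D_p) <= 0 for some p in P*, dropping p from P* keeps every valid
   contingency of P* valid (putting the rows D_p back adds Delta(D_p) <= 0, so
   Delta stays <= eps), and for a contingency G disjoint from the predicate, |G|_W only
   depends on G.  Hence P* :\ p has at least the responsibility of P* with one
   filter fewer, contradicting the optimality of P*. *)

Section WhyQueryFacts.
Variables (R : realFieldType) (T : finType) (m : nat).
Variables (M : T -> R) (s1 s2 : {set T}) (X : T -> 'I_m) (eps : R).

Local Notation Delta := (Delta M s1 s2).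
Local Notation DP := (DP X).
Local Notation valid_contingency := (valid_contingency M s1 s2 X eps).
Local Notation wsize := (wsize M s1 s2 X).
Local Notation rho := (rho M s1 s2 X eps).

Lemma Delta_setID (A B : {set T}) : Delta A = Delta (A :&: B) + Delta (A :\: B).
Proof.
rewrite /Defs.Delta (big_setID B) [X in _ - X](big_setID B) /=.
rewrite [(A :&: B) :&: s1]setIAC [(A :&: B) :&: s2]setIAC.
rewrite !setDE [(A :&: ~: B) :&: s1]setIAC [(A :&: ~: B) :&: s2]setIAC.
by rewrite opprD addrACA.
Qed.

Lemma Delta_setD_DP_sub (P Q G : {set 'I_m}) :
  [disjoint G & P] -> Q \subset P ->
  Delta ([set: T] :\: DP G :\: DP Q)
  = Delta ([set: T] :\: DP G :\: DP P) + Delta (DP (P :\: Q)).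
Proof.
move=> GP /subsetP QP.
rewrite (Delta_setID _ (DP (P :\: Q))) addrC.
congr (Delta _ + Delta _); apply/setP => t; rewrite !inE; case tP: (X t \in P);
  rewrite ?(disjointFl GP tP) ?andbF ?andbT ?andNb ?andbb //=.
by case tQ: (X t \in Q) => //; rewrite QP in tP.
Qed.

Lemma valid_contingency_disjoint (P G : {set 'I_m}) :
  valid_contingency P G -> [disjoint G & P].
Proof. by case/andP => /andP[]. Qed.

Lemma valid_contingency_sub (P Q G : {set 'I_m}) :
  Q \subset P -> Delta (DP (P :\: Q)) <= 0 ->
  valid_contingency P G -> valid_contingency Q G.
Proof.
move=> QP DPQ_le0 /andP[/andP[GP Dle] Dgt].
rewrite /Defs.valid_contingency (disjointWr QP GP) Dgt andbT /=.
by rewrite (Delta_setD_DP_sub GP QP); apply: le_trans (lerD Dle DPQ_le0) _; rewrite addr0.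
Qed.

Lemma wsize_disjoint (P G : {set 'I_m}) : [disjoint G & P] ->
  wsize P G = Num.max (Delta (DP G) / Delta [set: T]) 0.
Proof.
move=> GP; rewrite /Defs.wsize (Delta_setID ([set: T] :\: DP P) (DP G)) addrK.
congr (Num.max (Delta _ / _) _); apply/setP => t; rewrite !inE andbT.
by apply/andP/idP => [[]//|tG]; rewrite (disjointFr GP tG).
Qed.

Lemma wsize_ge0 (P G : {set 'I_m}) : 0 <= wsize P G.
Proof. by rewrite le_max lexx orbT. Qed.

Lemma rho_ge0 (P : {set 'I_m}) : 0 <= rho P.
Proof.
rewrite /Defs.rho; case: pickP => // G0 _.
rewrite div1r invr_ge0 addr_ge0 //; apply: le_bigmin => [|G _]; exact: wsize_ge0.
Qed.

Lemma rho_le (P Q : {set 'I_m}) :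
  (forall G, valid_contingency P G ->
     valid_contingency Q G /\ wsize Q G <= wsize P G) ->
  rho P <= rho Q.
Proof.
move=> PQ; rewrite {1}/Defs.rho; case: pickP => [G0 vP0|_]; last exact: rho_ge0.
have [vQ0 _] := PQ G0 vP0.
rewrite /Defs.rho; case: pickP => [G1 _|/(_ G0)]; last by rewrite vQ0.
set minP := \big[_/_]_(G | _) _; set minQ := \big[_/_]_(G | _) _.
have minQ_le : forall G, valid_contingency P G -> minQ <= wsize P G.
  move=> G /PQ[vQ le_w]; exact: le_trans (bigmin_le_cond _ _ vQ) le_w.
have minQ_ge0 : 0 <= minQ by apply: le_bigmin => [|G _]; exact: wsize_ge0.
have minQP : minQ <= minP by rewrite le_bigmin // minQ_le.
have minP_ge0 := le_trans minQ_ge0 minQP.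
by rewrite !div1r lef_pV2 ?posrE ?lerD2l // ?(ltr_wpDr _ ltr01).
Qed.

Lemma rho_le_sub (P Q : {set 'I_m}) :
  Q \subset P -> Delta (DP (P :\: Q)) <= 0 -> rho P <= rho Q.
Proof.
move=> QP DPQ_le0; apply: rho_le => G vP.
have vQ := valid_contingency_sub QP DPQ_le0 vP; split=> //.
have GP := valid_contingency_disjoint vP; have GQ := valid_contingency_disjoint vQ.
by rewrite !wsize_disjoint.
Qed.

Lemma objective_lt (sigma : R) (P Q : {set 'I_m}) :
  0 < sigma -> rho P <= rho Q -> (#|Q| < #|P|)%N ->
  objective M s1 s2 X eps sigma P < objective M s1 s2 X eps sigma Q.
Proof.
move=> sigma_gt0 rhoPQ QP; rewrite /objective ler_ltD // ltrN2 ltr_pM2l //.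
by rewrite ltr_nat.
Qed.

End WhyQueryFacts.

Theorem proposition3p14 (R : realFieldType) (T : finType) (m : nat)
  (M : T -> R) (s1 s2 : {set T}) (X : T -> 'I_m) (eps sigma : R)
  (Hdisj : [disjoint s1 & s2])
  (HDpos : 0 < Delta M s1 s2 [set: T])
  (Hsigma : 0 < sigma)
  (Pstar : {set 'I_m})
  (Hopt : optimal_explanation M s1 s2 X eps sigma Pstar) :
  forall p : 'I_m, p \in Pstar -> 0 < Delta M s1 s2 (DP X [set p]).
Proof.
move=> p Pp; rewrite ltNge; apply/negP => Dp_le0.
set Q := Pstar :\ p.
have QP : Q \subset Pstar := subD1set Pstar p.
have PQ : Pstar :\: Q = [set p].
  by apply/setP => q; rewrite !inE; case: eqVneq => [->|_]; rewrite ?eqxx ?Pp ?andNb.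
have rhoPQ : rho M s1 s2 X eps Pstar <= rho M s1 s2 X eps Q.
  by apply: rho_le_sub QP _; rewrite PQ.
have cardQ : (#|Q| < #|Pstar|)%N by rewrite (cardsD1 p Pstar) Pp.
by have := Hopt Q; rewrite leNgt objective_lt.
Qed.
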